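(* Let $\alpha\in(1,3)$, $n\ge2$, $\mu\ge0$, and let $V(r,\varphi)$ be the Maxwell-ring potential in polar coordinates described in the context. Then there is a positive function $\omega(r,\varphi)$ such that $$V_\varphi(r,\varphi)=-\sin(n\varphi)\,\omega(r,\varphi)$$ for all $(r,\varphi)$ in the domain of $V$ ($r>0$, $re^{i\varphi}$ not a vertex $e^{ij\zeta}$).
   Context: Let $\zeta=2\pi/n$, $\phi_\alpha'(r)=-r^{-\alpha}$, $s=2^{-\alpha}\sum_{j=1}^{n-1}\sin^{-(\alpha-1)}(j\zeta/2)$. In polar coordinates $u=re^{i\varphi}$, the planar potential of a satellite attracted by $n$ unit masses at $e^{ij\zeta}$ and a central mass $\mu$ at $0$ (rescaled) is $$V(r,\varphi)=\frac{r^2}{2}+\frac{\mu}{s+\mu}\phi_\alpha(r)+\sum_{j=1}^n\frac1{s+\mu}\phi_\alpha\big(\|r-e^{i(j\zeta-\varphi)}\|\big).$$ *)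

From Stdlib Require Import Reals.
From Coquelicot Require Import Coquelicot.
Open Scope R_scope.

Definition zeta (n : nat) : R := 2 * PI / INR n.

(* A primitive of phi'(r) = - r^(-alpha):  phi(r) = r^(1-alpha)/(alpha-1).
   (The additive constant is irrelevant for V_phi.) *)
Definition phi_alpha (alpha r : R) : R := Rpower r (1 - alpha) / (alpha - 1).

Definition s_const (alpha : R) (n : nat) : R :=
  Rpower 2 (- alpha) *
  sum_n_m (fun j => Rpower (sin (INR j * zeta n / 2)) (- (alpha - 1))) 1 (n - 1).

(* Euclidean norm of the complex number  r - e^{i theta}. *)
Definition dist_ring (r theta : R) : R :=
  sqrt ((r - cos theta) ^ 2 + (sin theta) ^ 2).

Definition V (alpha mu : R) (n : nat) (r varphi : R) : R :=
  r ^ 2 / 2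
  + mu / (s_const alpha n + mu) * phi_alpha alpha r
  + sum_n_m (fun j => / (s_const alpha n + mu) *
                      phi_alpha alpha (dist_ring r (INR j * zeta n - varphi))) 1 n.

Definition in_domain (n : nat) (r varphi : R) : Prop :=
  0 < r /\
  forall j : nat, ~ (r * cos varphi = cos (INR j * zeta n) /\
                     r * sin varphi = sin (INR j * zeta n)).

(* With theta_j = j zeta - varphi and D_j = |r - e^{i theta_j}|^2 one has
   V_varphi = r / (s + mu) * sum_j sin theta_j * D_j^(-(alpha+1)/2).
   For the exponent -2 the sum is explicit: summing the geometric series of
   1 / (1 - rho e^{i theta_j}) over the n-th roots of unity gives
   sum_j Re 1 / (1 - rho e^{i theta_j}) = n Re 1 / (1 - rho^n e^{-i n varphi}),
   and differentiating in varphi turns this into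
   sum_j sin theta_j / |rho - e^{i theta_j}|^4 = - sin (n varphi) * (positive).
   Since t + D_j = (r / rho) |rho - e^{i theta_j}|^2 for a suitable rho in (0, 1),
   the same holds for sum_j sin theta_j / (t + D_j)^2 for every t > 0.
   Finally, for 0 < d < 1 the power D^(d-2) is a positive mixture of these:
   D^(d-2) * int_R e^(d u) / (e^u + 1)^2 du = int_R e^(d v) / (e^v + D)^2 dv,
   which is used through integrals over [-T, T] with T large. *)

From Stdlib Require Import Reals Lra Lia.
From Coquelicot Require Import Coquelicot Complex.
Open Scope R_scope.

Lemma sum_n_m_rel {G H : AbelianMonoid} (Rel : G -> H -> Prop) (a : nat -> G) (b : nat -> H) m n :
  Rel zero zero ->
  (forall x y x' y', Rel x x' -> Rel y y' -> Rel (plus x y) (plus x' y')) ->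
  (forall k, (m <= k <= n)%nat -> Rel (a k) (b k)) ->
  Rel (sum_n_m a m n) (sum_n_m b m n).
Proof.
  intros H0 Hplus Hab. induction n as [|n IH].
  - destruct m as [|m].
    + rewrite !sum_n_n. apply Hab; lia.
    + rewrite !sum_n_m_zero by lia. exact H0.
  - destruct (Nat.le_gt_cases m (S n)) as [Hm|Hm].
    + rewrite !sum_n_Sm by lia. apply Hplus; [apply IH | apply Hab]; intros; try apply Hab; lia.
    + rewrite !sum_n_m_zero by lia. exact H0.
Qed.

Lemma sum_n_m_fun_rel (Rel : (R -> R) -> R -> Prop) (f : nat -> R -> R) (b : nat -> R) m n :
  (forall F G y, (forall t, F t = G t) -> Rel F y -> Rel G y) ->
  Rel (fun _ => 0) 0 ->
  (forall F G y z, Rel F y -> Rel G z -> Rel (fun t => F t + G t) (y + z)) ->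
  (forall k, (m <= k <= n)%nat -> Rel (f k) (b k)) ->
  Rel (fun t => sum_n_m (fun k => f k t) m n) (sum_n_m b m n).
Proof.
  intros Hext H0 Hplus Hfb. induction n as [|n IH].
  - destruct m as [|m].
    + rewrite sum_n_n. apply (Hext (f 0%nat)); [intro; now rewrite sum_n_n | apply Hfb; lia].
    + rewrite sum_n_m_zero by lia.
      apply (Hext (fun _ => 0)); [intro; now rewrite sum_n_m_zero by lia | exact H0].
  - destruct (Nat.le_gt_cases m (S n)) as [Hm|Hm].
    + rewrite sum_n_Sm by lia.
      apply (Hext (fun t => sum_n_m (fun k => f k t) m n + f (S n) t));
        [intro; now rewrite sum_n_Sm by lia|].
      apply Hplus; [apply IH | apply Hfb]; intros; try apply Hfb; lia.
    + rewrite sum_n_m_zero by lia.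
      apply (Hext (fun _ => 0)); [intro; now rewrite sum_n_m_zero by lia | exact H0].
Qed.

Lemma sum_n_m_le_loc (a b : nat -> R) m n :
  (forall k, (m <= k <= n)%nat -> a k <= b k) -> sum_n_m a m n <= sum_n_m b m n.
Proof. apply (sum_n_m_rel Rle); [apply Rle_refl | intros; now apply Rplus_le_compat]. Qed.

Lemma sum_n_m_nonneg (a : nat -> R) m n :
  (forall k, (m <= k <= n)%nat -> 0 <= a k) -> 0 <= sum_n_m a m n.
Proof.
  intros Ha. apply (Rle_trans _ (sum_n_m (fun _ => 0) m n)).
  - right. symmetry. apply (sum_n_m_const_zero (G := R_AbelianMonoid)).
  - now apply sum_n_m_le_loc.
Qed.

Lemma sum_n_m_pos (a : nat -> R) m n : (m <= n)%nat ->
  (forall k, (m <= k <= n)%nat -> 0 < a k) -> 0 < sum_n_m a m n.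
Proof.
  intros Hmn Ha. rewrite sum_Sn_m by exact Hmn.
  apply Rplus_lt_le_0_compat; [apply Ha; lia |].
  apply sum_n_m_nonneg. intros k Hk. left. apply Ha. lia.
Qed.

Lemma sum_n_m_minus (a b : nat -> R) m n :
  sum_n_m (fun k => a k - b k) m n = sum_n_m a m n - sum_n_m b m n.
Proof.
  unfold Rminus. rewrite (sum_n_m_plus (G := R_AbelianMonoid) a (fun k => - b k)).
  apply (f_equal (Rplus (sum_n_m a m n))). symmetry.
  apply (sum_n_m_rel (fun x y => - x = y)); [apply Ropp_0 | intros; subst; apply Ropp_plus_distr | auto].
Qed.

Lemma finite_family_bounded (f : nat -> R) m n : exists C, forall k, (m <= k <= n)%nat -> f k <= C.
Proof.
  induction n as [|n [C HC]].
  - exists (f 0%nat). intros k Hk. replace k with 0%nat by lia. apply Rle_refl.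
  - exists (Rmax C (f (S n))). intros k Hk. destruct (Nat.eq_dec k (S n)) as [-> | Hk'].
    + apply Rmax_r.
    + eapply Rle_trans; [apply HC; lia | apply Rmax_l].
Qed.

Lemma re_sum_n_m (a : nat -> C) m n : Re (sum_n_m a m n) = sum_n_m (fun k => Re (a k)) m n.
Proof. apply (sum_n_m_rel (fun z y => Re z = y)); [reflexivity | intros; subst; apply re_plus | auto]. Qed.

Lemma RtoC_sum_n_m (a : nat -> R) m n : RtoC (sum_n_m a m n) = sum_n_m (fun k => RtoC (a k)) m n.
Proof.
  apply (sum_n_m_rel (fun y z => RtoC y = z)); [reflexivity | intros; subst; apply RtoC_plus | auto].
Qed.

Lemma is_derive_sum_n_m (f : nat -> R -> R) (f' : nat -> R) m n x :
  (forall k, (m <= k <= n)%nat -> is_derive (f k) x (f' k)) ->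
  is_derive (fun t => sum_n_m (fun k => f k t) m n) x (sum_n_m f' m n).
Proof.
  apply (sum_n_m_fun_rel (fun F y => is_derive F x y)).
  - intros F G y HFG HF. now apply (is_derive_ext F).
  - apply (is_derive_const 0).
  - intros. now apply (is_derive_plus F G).
Qed.

Lemma is_RInt_sum_n_m (f : nat -> R -> R) (I : nat -> R) m n a b :
  (forall k, (m <= k <= n)%nat -> is_RInt (f k) a b (I k)) ->
  is_RInt (fun t => sum_n_m (fun k => f k t) m n) a b (sum_n_m I m n).
Proof.
  apply (sum_n_m_fun_rel (fun F y => is_RInt F a b y)).
  - intros F G y HFG HF. now apply (is_RInt_ext F).
  - pose proof (@is_RInt_const R_CompleteNormedModule a b 0) as H0.
    unfold scal in H0; simpl in H0; unfold mult in H0; simpl in H0.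
    now rewrite Rmult_0_r in H0.
  - intros. now apply (is_RInt_plus F G).
Qed.

Lemma is_derive_value (f : R -> R) (x l l' : R) : is_derive f x l -> l = l' -> is_derive f x l'.
Proof. now intros H <-. Qed.

Lemma exp_le x y : x <= y -> exp x <= exp y.
Proof. intros [H | ->]; [now left; apply exp_increasing | apply Rle_refl]. Qed.

Lemma pow_lt_1_nonneg x n : (0 < n)%nat -> 0 <= x < 1 -> 0 <= x ^ n < 1.
Proof. intros Hn Hx. split; [apply pow_le; lra | apply pow_lt_1_compat; [lra | lia]]. Qed.

Definition ring_angle (n : nat) (phi : R) (j : nat) : R := INR j * zeta n - phi.

Definition dist_ring2 (r theta : R) : R := 1 + r ^ 2 - 2 * r * cos theta.

Lemma dist_ring_sqr r theta : (r - cos theta) ^ 2 + sin theta ^ 2 = dist_ring2 r theta.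
Proof.
  unfold dist_ring2. pose proof (sin2_cos2 theta) as H. unfold Rsqr in H. nra.
Qed.

Lemma dist_ring2_pos r theta : 0 <= r < 1 -> 0 < dist_ring2 r theta.
Proof. intros Hr. unfold dist_ring2. pose proof (COS_bound theta). nra. Qed.

Lemma dist_ring2_neg r theta : dist_ring2 r (- theta) = dist_ring2 r theta.
Proof. unfold dist_ring2. now rewrite cos_neg. Qed.

Lemma INR_mul_zeta n : (0 < n)%nat -> INR n * zeta n = 2 * PI.
Proof. intros Hn. unfold zeta. field. apply not_0_INR. lia. Qed.

Lemma ring_angle_mul_n n phi j : (0 < n)%nat ->
  INR n * ring_angle n phi j = INR j * (2 * PI) - INR n * phi.
Proof. intros Hn. unfold ring_angle. rewrite <- (INR_mul_zeta n Hn). ring. Qed.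

Definition cis (x : R) : C := (cos x, sin x).

Lemma cis_add x y : (cis x * cis y)%C = cis (x + y).
Proof. unfold cis, Cmult; simpl. rewrite cos_plus, sin_plus. f_equal; ring. Qed.

Lemma cis_pow x k : (cis x ^ k)%C = cis (INR k * x).
Proof.
  induction k as [|k IH].
  - unfold cis. simpl. rewrite Rmult_0_l, cos_0, sin_0. reflexivity.
  - rewrite Cpow_S, IH, cis_add, S_INR. f_equal. ring.
Qed.

Lemma cis_periodic k x : cis (INR k * (2 * PI) + x) = cis x.
Proof.
  unfold cis. replace (INR k * (2 * PI) + x) with (x + 2 * INR k * PI) by ring.
  rewrite cos_period, sin_period. reflexivity.
Qed.

Lemma cis_neq_1 x : 0 < x < 2 * PI -> cis x <> 1%C.
Proof.
  intros Hx Heq. injection Heq as Hcos _.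
  replace x with (2 * (x / 2)) in Hcos by field. rewrite cos_2a_sin in Hcos.
  assert (0 < sin (x / 2)) by (apply sin_gt_0; lra). nra.
Qed.

Lemma one_sub_cis_neq_0 r x : 0 <= r < 1 -> (1 - RtoC r * cis x)%C <> 0%C.
Proof.
  intros Hr H. injection H as H _. pose proof (COS_bound x). simpl in H. nra.
Qed.

Lemma re_inv_one_sub_cis r x : 0 <= r < 1 ->
  Re (/ (1 - RtoC r * cis x))%C = (1 - r * cos x) / dist_ring2 r x.
Proof.
  intros Hr. unfold Cinv, cis, RtoC, Cminus, Cmult, Cplus, Copp, Re, dist_ring2. simpl.
  pose proof (sin2_cos2 x) as H. unfold Rsqr in H.
  f_equal; [ring|].
  transitivity (1 + r * r * (sin x * sin x + cos x * cos x) - 2 * r * cos x); [ring|].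
  rewrite H. ring.
Qed.

Lemma geometric_sum_C (z : C) m n : (m <= S n)%nat ->
  ((1 - z) * sum_n_m (fun a => z ^ a) m n = z ^ m - z ^ S n)%C.
Proof.
  induction n as [|n IH]; intros Hm.
  - destruct m as [|[|m]]; [rewrite sum_n_n | rewrite sum_n_m_zero by lia | lia];
      simpl; change (zero : C_AbelianMonoid) with (RtoC 0); ring.
  - destruct (Nat.eq_dec m (S (S n))) as [->|Hm'].
    + rewrite sum_n_m_zero by lia. change (zero : C_AbelianMonoid) with (RtoC 0). ring.
    + rewrite sum_n_Sm by lia. change (@plus C_AbelianMonoid) with Cplus.
      rewrite Cmult_plus_distr_l, IH by lia. rewrite !Cpow_S. ring.
Qed.

Lemma sum_pow_root_of_unity (u : C) n : (u ^ n = 1)%C -> u <> 1%C ->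
  (sum_n_m (fun j => u ^ j)%C 1 n : C) = 0%C.
Proof.
  intros Hn Hu.
  assert (Hu' : (1 - u)%C <> 0%C) by (apply Cminus_eq_contra; auto).
  pose proof (geometric_sum_C u 1 n ltac:(lia)) as G.
  rewrite (Cpow_S u n), Hn in G. simpl in G.
  replace (sum_n_m _ 1 n) with (/ (1 - u) * ((1 - u) * sum_n_m (fun j => u ^ j)%C 1 n))%C
    by (field; exact Hu').
  rewrite G. ring.
Qed.

Lemma sum_cis_ring_angle n a phi : (1 <= a < n)%nat ->
  (sum_n_m (fun j => cis (INR a * ring_angle n phi j)) 1 n : C) = 0%C.
Proof.
  intros Ha.
  assert (Hn : (0 < n)%nat) by lia.
  rewrite (sum_n_m_ext _ (fun j => cis (- (INR a * phi)) * cis (INR a * zeta n) ^ j)%C).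
  2: { intro j. rewrite cis_pow, cis_add. unfold ring_angle. f_equal. ring. }
  rewrite (@sum_n_m_mult_l C_Ring). change (@mult C_Ring) with Cmult.
  rewrite sum_pow_root_of_unity; [ring | |].
  - rewrite cis_pow, <- (Rplus_0_r (INR n * _)).
    replace (INR n * (INR a * zeta n)) with (INR a * (2 * PI))
      by (rewrite <- (INR_mul_zeta n Hn); ring).
    rewrite cis_periodic. unfold cis. now rewrite cos_0, sin_0.
  - apply cis_neq_1. pose proof PI_RGT_0. split.
    + apply Rmult_lt_0_compat; [apply lt_0_INR; lia |].
      unfold zeta. apply Rdiv_lt_0_compat; [lra | apply lt_0_INR; lia].
    + rewrite <- (INR_mul_zeta n Hn). apply Rmult_lt_compat_r.
      * unfold zeta. apply Rdiv_lt_0_compat; [lra | apply lt_0_INR; lia].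
      * apply lt_INR; lia.
Qed.

Lemma sum_ring_geometric n rho phi m : (m < n)%nat ->
  (sum_n_m (fun j => sum_n (fun a => (RtoC rho * cis (ring_angle n phi j)) ^ a)%C m) 1 n : C)
  = RtoC (INR n).
Proof.
  induction m as [|m IH]; intros Hm.
  - rewrite (sum_n_m_ext _ (fun _ => RtoC 1)) by (intro; now rewrite sum_O).
    rewrite <- RtoC_sum_n_m, sum_n_m_const. f_equal.
    replace (S n - 1)%nat with n by lia. ring.
  - rewrite (sum_n_m_ext _ (fun j =>
      sum_n (fun a => (RtoC rho * cis (ring_angle n phi j)) ^ a)%C m
      + RtoC (rho ^ S m) * cis (INR (S m) * ring_angle n phi j))%C).
    2: { intro j. now rewrite sum_Sn, Cpow_mult_l, cis_pow, RtoC_pow. }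
    rewrite (@sum_n_m_plus C_AbelianMonoid), IH by lia. rewrite (@sum_n_m_mult_l C_Ring).
    change (@mult C_Ring) with Cmult. change (@plus C_AbelianMonoid) with Cplus.
    rewrite sum_cis_ring_angle by lia. ring.
Qed.

Lemma sum_inv_one_sub_cis n rho phi : (0 < n)%nat -> 0 <= rho < 1 ->
  (sum_n_m (fun j => / (1 - RtoC rho * cis (ring_angle n phi j)))%C 1 n : C) =
  (RtoC (INR n) / (1 - RtoC (rho ^ n) * cis (- (INR n * phi))))%C.
Proof.
  intros Hn Hrho.
  pose proof (pow_lt_1_nonneg rho n Hn Hrho) as Hrho_n.
  set (w := (RtoC (rho ^ n) * cis (- (INR n * phi)))%C).
  assert (Hw : (1 - w)%C <> 0%C) by (apply one_sub_cis_neq_0; auto).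
  assert (Hterm : forall j, (/ (1 - RtoC rho * cis (ring_angle n phi j)) =
    / (1 - w) * sum_n (fun a => (RtoC rho * cis (ring_angle n phi j)) ^ a) (n - 1))%C).
  { intro j.
    assert (Hj := one_sub_cis_neq_0 rho (ring_angle n phi j) Hrho).
    set (z := (RtoC rho * cis (ring_angle n phi j))%C) in *.
    assert (Hzn : (z ^ n)%C = w).
    { unfold z, w. rewrite Cpow_mult_l, cis_pow, <- RtoC_pow, ring_angle_mul_n by lia.
      unfold Rminus. now rewrite cis_periodic. }
    pose proof (geometric_sum_C z 0 (n - 1) ltac:(lia)) as G.
    replace (S (n - 1)) with n in G by lia. rewrite Hzn in G. simpl in G.
    assert (Hsolve : forall S : C, ((1 - z) * S = 1 - w)%C -> S = ((1 - w) / (1 - z))%C)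
      by (intros S HS; rewrite <- HS; field; auto).
    unfold sum_n. rewrite (Hsolve _ G). field. auto. }
  rewrite (sum_n_m_ext _ _ _ _ Hterm), (@sum_n_m_mult_l C_Ring). change (@mult C_Ring) with Cmult.
  rewrite sum_ring_geometric by lia. unfold Cdiv. ring.
Qed.

Lemma sum_poisson_kernel n rho phi : (0 < n)%nat -> 0 <= rho < 1 ->
  sum_n_m (fun j => (1 - rho * cos (ring_angle n phi j)) / dist_ring2 rho (ring_angle n phi j)) 1 n
  = INR n * ((1 - rho ^ n * cos (INR n * phi)) / dist_ring2 (rho ^ n) (INR n * phi)).
Proof.
  intros Hn Hrho.
  pose proof (pow_lt_1_nonneg rho n Hn Hrho) as Hrho_n.
  rewrite (sum_n_m_ext _ (fun j => Re (/ (1 - RtoC rho * cis (ring_angle n phi j)))%C))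
    by (intro; now rewrite re_inv_one_sub_cis).
  rewrite <- re_sum_n_m, sum_inv_one_sub_cis by auto.
  rewrite <- (cos_neg (INR n * phi)), <- dist_ring2_neg, <- re_inv_one_sub_cis by exact Hrho_n.
  unfold Cdiv, Re, RtoC, Cmult. simpl. ring.
Qed.

Lemma is_derive_poisson_kernel rho (g : R -> R) x g' : 0 <= rho < 1 -> is_derive g x g' ->
  is_derive (fun t => (1 - rho * cos (g t)) / dist_ring2 rho (g t)) x
    (- g' * rho * (1 - rho ^ 2) * sin (g x) / dist_ring2 rho (g x) ^ 2).
Proof.
  intros Hrho Hg. pose proof (dist_ring2_pos rho (g x) Hrho). unfold dist_ring2 in *.
  assert (Dg : ex_derive g x) by (exists g'; exact Hg).
  auto_derive; [repeat split; auto; lra|].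
  replace (Derive (fun t => g t) x) with g' by (symmetry; now apply is_derive_unique).
  field. lra.
Qed.

Lemma sum_sin_div_dist_ring2_sqr n rho phi : (0 < n)%nat -> 0 < rho < 1 ->
  sum_n_m (fun j => sin (ring_angle n phi j) / dist_ring2 rho (ring_angle n phi j) ^ 2) 1 n =
  - sin (INR n * phi) * (INR n ^ 2 * rho ^ n * (1 - (rho ^ n) ^ 2) /
                         (rho * (1 - rho ^ 2) * dist_ring2 (rho ^ n) (INR n * phi) ^ 2)).
Proof.
  intros Hn Hrho.
  pose proof (pow_lt_1_nonneg rho n Hn ltac:(lra)) as Hrho_n.
  assert (Hangle : forall j, is_derive (fun t => ring_angle n t j) phi (-1)).
  { intro j. unfold ring_angle. auto_derive; [auto | ring]. }
  assert (Hnphi : is_derive (fun t => INR n * t) phi (INR n)).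
  { auto_derive; [auto | ring]. }
  assert (Hlhs : is_derive (fun t => sum_n_m (fun j =>
       (1 - rho * cos (ring_angle n t j)) / dist_ring2 rho (ring_angle n t j)) 1 n) phi
     (sum_n_m (fun j => rho * (1 - rho ^ 2) *
       (sin (ring_angle n phi j) / dist_ring2 rho (ring_angle n phi j) ^ 2)) 1 n)).
  { apply is_derive_sum_n_m. intros j _.
    eapply is_derive_value; [apply (is_derive_poisson_kernel rho _ phi _ ltac:(lra) (Hangle j)) |].
    unfold Rdiv. ring. }
  assert (Hrhs : is_derive (fun t => INR n * ((1 - rho ^ n * cos (INR n * t)) /
                                          dist_ring2 (rho ^ n) (INR n * t))) phi
    (INR n * (- INR n * rho ^ n * (1 - (rho ^ n) ^ 2) * sin (INR n * phi) /
              dist_ring2 (rho ^ n) (INR n * phi) ^ 2))).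
  { apply (is_derive_scal (fun t => (1 - rho ^ n * cos (INR n * t)) / dist_ring2 (rho ^ n) (INR n * t))).
    apply (is_derive_poisson_kernel (rho ^ n) _ phi _ ltac:(lra) Hnphi). }
  eapply is_derive_ext in Hlhs; [| intro t; apply sum_poisson_kernel; [exact Hn | lra]].
  pose proof (is_derive_unique _ _ _ Hlhs) as Hderiv.
  rewrite (is_derive_unique _ _ _ Hrhs) in Hderiv.
  pose proof (dist_ring2_pos (rho ^ n) (INR n * phi) ltac:(lra)).
  apply (Rmult_eq_reg_l (rho * (1 - rho ^ 2))); [| nra].
  etransitivity; [symmetry; apply (@sum_n_m_mult_l R_Ring) |].
  etransitivity; [symmetry; exact Hderiv |]. field. repeat split; nra.
Qed.

Definition pos_multiple (b x : R) : Prop := exists w, 0 < w /\ x = b * w.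

Lemma pos_multiple_scale b x c : 0 < c -> pos_multiple b x -> pos_multiple b (c * x).
Proof. intros Hc [w [Hw ->]]. exists (c * w). split; [nra | ring]. Qed.

Definition pos_multiple_ratio (b x : R) : R := if Req_EM_T b 0 then 1 else x / b.

Lemma pos_multiple_ratio_spec b x : pos_multiple b x ->
  0 < pos_multiple_ratio b x /\ x = b * pos_multiple_ratio b x.
Proof.
  intros [w [Hw ->]]. unfold pos_multiple_ratio.
  destruct (Req_EM_T b 0) as [-> | Hb]; [split; [lra | ring] |].
  replace (b * w / b) with w by (field; exact Hb). split; [exact Hw | reflexivity].
Qed.

Lemma dist_ring2_shift_rescale r s : 0 < r -> 0 < s ->
  exists rho, 0 < rho < 1 /\ forall theta, s + dist_ring2 r theta = r / rho * dist_ring2 rho theta.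
Proof.
  intros Hr Hs.
  set (A := 1 + r ^ 2 + s).
  assert (HA : 2 * r < A) by (unfold A; pose proof (pow2_ge_0 (1 - r)); nra).
  pose proof (sqrt_pos (A ^ 2 - 4 * r ^ 2)) as Hy0.
  pose proof (sqrt_sqrt (A ^ 2 - 4 * r ^ 2) ltac:(nra)) as Hy2.
  set (y := sqrt (A ^ 2 - 4 * r ^ 2)) in *.
  assert (Hy : A - 2 * r < y < A) by nra.
  (* rho is the root in (0, 1) of r * (1 + rho ^ 2) = A * rho *)
  exists ((A - y) / (2 * r)). split.
  - split; [apply Rdiv_lt_0_compat; lra |].
    apply (Rmult_lt_reg_r (2 * r)); [lra |]. unfold Rdiv. rewrite Rmult_assoc, Rinv_l; lra.
  - intro theta. unfold dist_ring2. field_simplify_eq; [| lra]. unfold A in *. nra.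
Qed.

Lemma sum_sin_div_shifted_dist_sqr n r s phi : (0 < n)%nat -> 0 < r -> 0 < s ->
  pos_multiple (- sin (INR n * phi))
    (sum_n_m (fun j => sin (ring_angle n phi j) / (s + dist_ring2 r (ring_angle n phi j)) ^ 2) 1 n).
Proof.
  intros Hn Hr Hs.
  destruct (dist_ring2_shift_rescale r s Hr Hs) as [rho [Hrho Hresc]].
  pose proof (pow_lt_1_nonneg rho n Hn ltac:(lra)) as Hrho_n.
  pose proof (pow_lt rho n ltac:(lra)) as Hrho_n_pos.
  assert (Hterm : forall j, sin (ring_angle n phi j) / (s + dist_ring2 r (ring_angle n phi j)) ^ 2
    = (rho / r) ^ 2 * (sin (ring_angle n phi j) / dist_ring2 rho (ring_angle n phi j) ^ 2)).
  { intro j. rewrite Hresc. pose proof (dist_ring2_pos rho (ring_angle n phi j) ltac:(lra)).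
    field. lra. }
  rewrite (sum_n_m_ext _ _ _ _ Hterm).
  rewrite (@sum_n_m_mult_l R_Ring). change (@mult R_Ring) with Rmult.
  apply pos_multiple_scale; [apply pow_lt, Rdiv_lt_0_compat; lra |].
  rewrite sum_sin_div_dist_ring2_sqr by (auto; lra).
  eexists; split; [| reflexivity].
  pose proof (dist_ring2_pos (rho ^ n) (INR n * phi) ltac:(lra)).
  pose proof (lt_0_INR n Hn).
  apply Rdiv_lt_0_compat.
  - apply Rmult_lt_0_compat; [apply Rmult_lt_0_compat; [nra | lra] | nra].
  - apply Rmult_lt_0_compat; [nra | apply pow_lt; lra].
Qed.

Definition beta_kernel (d u : R) : R := exp (d * u) / (exp u + 1) ^ 2.

Lemma beta_kernel_pos d u : 0 < beta_kernel d u.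
Proof.
  unfold beta_kernel. pose proof (exp_pos u).
  apply Rdiv_lt_0_compat; [apply exp_pos | apply pow_lt; lra].
Qed.

Lemma beta_kernel_continuous d u : continuous (beta_kernel d) u.
Proof.
  apply (ex_derive_continuous (beta_kernel d)). unfold beta_kernel. pose proof (exp_pos u).
  auto_derive. apply Rgt_not_eq. nra.
Qed.

Lemma ex_RInt_beta_kernel d a b : ex_RInt (beta_kernel d) a b.
Proof. apply (@ex_RInt_continuous R_CompleteNormedModule). intros. apply beta_kernel_continuous. Qed.

Lemma beta_kernel_le_exp_abs d u : 0 < d <= 1 -> beta_kernel d u <= exp (- (d * Rabs u)).
Proof.
  intros Hd. unfold beta_kernel. pose proof (exp_pos u) as Heu. pose proof (exp_pos (d * u)).
  destruct (Rle_lt_dec 0 u) as [Hu|Hu].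
  - rewrite Rabs_right by lra.
    apply (Rle_trans _ (exp (d * u) / exp (2 * u))).
    + apply Rmult_le_compat_l; [lra |]. apply Rinv_le_contravar; [apply exp_pos |].
      replace (2 * u) with (u + u) by ring. rewrite exp_plus. nra.
    + unfold Rdiv. rewrite <- exp_Ropp, <- exp_plus. apply exp_le. nra.
  - rewrite Rabs_left by lra.
    apply (Rle_trans _ (exp (d * u) / 1)).
    + apply Rmult_le_compat_l; [lra |]. apply Rinv_le_contravar; [lra | nra].
    + rewrite Rdiv_1_r. apply exp_le. lra.
Qed.

Lemma beta_kernel_rescale d x v : 0 < x ->
  exp (d * v) / (exp v + x) ^ 2 = Rpower x (d - 2) * beta_kernel d (v - ln x).
Proof.
  intros Hx. unfold Rpower, beta_kernel. pose proof (exp_pos v).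
  assert (E : exp (v - ln x) = exp v / x).
  { unfold Rminus. rewrite exp_plus, exp_Ropp, exp_ln by exact Hx. reflexivity. }
  replace (d * (v - ln x)) with (d * v + - (d * ln x)) by ring.
  replace ((d - 2) * ln x) with (d * ln x + - (2 * ln x)) by ring.
  rewrite E, !exp_plus, !exp_Ropp.
  replace (2 * ln x) with (ln x + ln x) by ring. rewrite exp_plus, exp_ln by exact Hx.
  field. repeat split; try apply exp_neq_0; lra.
Qed.

Lemma is_RInt_rescaled_beta_kernel d x a b : 0 < x ->
  is_RInt (fun v => exp (d * v) / (exp v + x) ^ 2) a b
    (Rpower x (d - 2) * RInt (beta_kernel d) (a - ln x) (b - ln x)).
Proof.
  intros Hx.
  pose proof (RInt_correct _ _ _ (ex_RInt_beta_kernel d (1 * a + - ln x) (1 * b + - ln x))) as H.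
  apply is_RInt_comp_lin, (is_RInt_scal _ _ _ (Rpower x (d - 2))) in H.
  replace (1 * a + - ln x) with (a - ln x) in H by ring.
  replace (1 * b + - ln x) with (b - ln x) in H by ring.
  eapply is_RInt_ext; [| exact H].
  intros v _. rewrite (beta_kernel_rescale d x v Hx). unfold scal; simpl; unfold mult; simpl.
  f_equal. rewrite Rmult_1_l. f_equal. ring.
Qed.

Lemma RInt_beta_kernel_tail d a b m : 0 < d <= 1 ->
  (forall u, Rmin a b <= u <= Rmax a b -> m <= Rabs u) ->
  Rabs (RInt (beta_kernel d) a b) <= Rabs (b - a) * exp (- (d * m)).
Proof.
  intros Hd Hm.
  apply (norm_RInt_le_const_abs (beta_kernel d));
    [| apply (@RInt_correct R_CompleteNormedModule), ex_RInt_beta_kernel].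
  intros u Hu. pose proof (beta_kernel_pos d u).
  change (norm (beta_kernel d u)) with (Rabs (beta_kernel d u)). rewrite Rabs_right by lra.
  eapply Rle_trans; [apply beta_kernel_le_exp_abs; exact Hd |].
  apply exp_le. specialize (Hm u Hu). nra.
Qed.

Lemma RInt_beta_kernel_shift d c T : 0 < d <= 1 -> Rabs c <= T ->
  Rabs (RInt (beta_kernel d) (- T - c) (T - c) - RInt (beta_kernel d) (- T) T)
  <= 2 * Rabs c * exp (- (d * (T - Rabs c))).
Proof.
  intros Hd Hc.
  pose proof (Rle_abs c). pose proof (Rle_abs (- c)). rewrite Rabs_Ropp in *.
  assert (Chasles : forall a b e, RInt (beta_kernel d) a b + RInt (beta_kernel d) b e
                                  = RInt (beta_kernel d) a e)
    by (intros; apply (@RInt_Chasles R_CompleteNormedModule); apply ex_RInt_beta_kernel).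
  rewrite <- (Chasles (- T - c) (- T) (T - c)), <- (Chasles (- T) (T - c) T).
  replace (RInt _ (- T - c) (- T) + RInt _ (- T) (T - c) - (RInt _ (- T) (T - c) + RInt _ (T - c) T))
    with (RInt (beta_kernel d) (- T - c) (- T) - RInt (beta_kernel d) (T - c) T) by ring.
  eapply Rle_trans; [apply Rabs_triang |]. rewrite Rabs_Ropp.
  replace (2 * Rabs c * _) with (Rabs (- T - (- T - c)) * exp (- (d * (T - Rabs c)))
                                + Rabs (T - (T - c)) * exp (- (d * (T - Rabs c))))
    by (replace (- T - (- T - c)) with c by ring; replace (T - (T - c)) with c by ring; ring).
  apply Rplus_le_compat; apply RInt_beta_kernel_tail; try exact Hd; intros u [Hu1 Hu2].
  - assert (u <= - T + Rabs c) by (apply (Rle_trans _ _ _ Hu2), Rmax_lub; lra).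
    pose proof (Rle_abs (- u)). rewrite Rabs_Ropp in *. lra.
  - assert (T - Rabs c <= u) by (refine (Rle_trans _ _ _ _ Hu1); apply Rmin_glb; lra).
    pose proof (Rle_abs u). lra.
Qed.

Lemma exp_decay_small M d eps T0 : 0 < d -> 0 < eps ->
  exists T, T0 <= T /\ M * exp (- (d * T)) < eps.
Proof.
  intros Hd Heps. exists (Rmax T0 (M / (d * eps)) + 1).
  set (T := Rmax T0 (M / (d * eps)) + 1).
  pose proof (Rmax_l T0 (M / (d * eps))). pose proof (Rmax_r T0 (M / (d * eps))).
  split; [unfold T; lra |].
  assert (HM : M < eps * (d * T)).
  { assert (M / (d * eps) < T) as HT by (unfold T; lra).
    apply (Rmult_lt_compat_r (d * eps)) in HT; [| nra].
    replace (M / (d * eps) * (d * eps)) with M in HT by (field; lra). lra. }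
  pose proof (exp_ineq1_le (d * T)). pose proof (exp_pos (d * T)).
  rewrite exp_Ropp. apply (Rmult_lt_reg_r (exp (d * T))); [lra |].
  rewrite Rmult_assoc, Rinv_l by lra. nra.
Qed.

Lemma beta_kernel_shift_small d C eps T0 : 0 < d <= 1 -> 0 < eps ->
  exists T, T0 <= T /\ forall c, Rabs c <= C ->
    Rabs (RInt (beta_kernel d) (- T - c) (T - c) - RInt (beta_kernel d) (- T) T) < eps.
Proof.
  intros Hd Heps.
  destruct (exp_decay_small (2 * C * exp (d * C)) d eps (Rmax T0 C) ltac:(lra) Heps)
    as [T [HT Hsmall]].
  pose proof (Rmax_l T0 C). pose proof (Rmax_r T0 C).
  exists T. split; [lra |]. intros c Hc.
  eapply Rle_lt_trans; [apply RInt_beta_kernel_shift; [exact Hd | lra] |].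
  eapply Rle_lt_trans; [| exact Hsmall].
  replace (- (d * (T - Rabs c))) with (d * Rabs c + - (d * T)) by ring.
  rewrite exp_plus, <- Rmult_assoc.
  apply Rmult_le_compat_r; [apply Rlt_le, exp_pos |].
  pose proof (Rabs_pos c). pose proof (exp_pos (d * Rabs c)).
  assert (exp (d * Rabs c) <= exp (d * C)) by (apply exp_le; nra).
  nra.
Qed.

Lemma sum_shifted_beta_kernel_approx (w c : nat -> R) d m n eps : 0 < d <= 1 -> 0 < eps ->
  exists T, 1 <= T /\
    Rabs (sum_n_m w m n * RInt (beta_kernel d) (- T) T
          - sum_n_m (fun j => w j * RInt (beta_kernel d) (- T - c j) (T - c j)) m n) < eps.
Proof.
  intros Hd Heps.
  destruct (finite_family_bounded (fun j => Rabs (c j)) m n) as [C HC].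
  set (M := sum_n_m (fun j => Rabs (w j)) m n).
  assert (HM : 0 <= M) by (apply sum_n_m_nonneg; intros; apply Rabs_pos).
  destruct (beta_kernel_shift_small d C (eps / (M + 1)) 1 Hd) as [T [HT Hsmall]].
  { apply Rdiv_lt_0_compat; lra. }
  exists T. split; [exact HT |].
  rewrite <- (@sum_n_m_mult_r R_Ring), <- sum_n_m_minus.
  eapply Rle_lt_trans; [apply (norm_sum_n_m (K := R_AbsRing) (V := R_NormedModule)) |].
  apply (Rle_lt_trans _ (M * (eps / (M + 1)))).
  - unfold M. rewrite <- (@sum_n_m_mult_r R_Ring). apply sum_n_m_le_loc. intros j Hj.
    change (norm ?x) with (Rabs x). unfold mult; simpl.
    replace (w j * _ - _) with (- (w j * (RInt (beta_kernel d) (- T - c j) (T - c j)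
                                          - RInt (beta_kernel d) (- T) T))) by ring.
    rewrite Rabs_Ropp, Rabs_mult. apply Rmult_le_compat_l; [apply Rabs_pos |].
    left. apply Hsmall, (HC j Hj).
  - apply (Rmult_lt_reg_r (M + 1)); [lra |].
    replace (M * (eps / (M + 1)) * (M + 1)) with (M * eps) by (field; lra). nra.
Qed.

Lemma RInt_sym_pos (h : R -> R) T : (forall x, continuous h x) -> (forall x, 0 < h x) -> 1 <= T ->
  0 < RInt h (-1) 1 <= RInt h (- T) T.
Proof.
  intros Hc Hp HT.
  assert (Ex : forall a b, ex_RInt h a b)
    by (intros; apply (@ex_RInt_continuous R_CompleteNormedModule); auto).
  assert (Chasles : forall a b c, RInt h a b + RInt h b c = RInt h a c)
    by (intros; apply (@RInt_Chasles R_CompleteNormedModule); auto).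
  split; [apply RInt_gt_0; auto; lra |].
  rewrite <- (Chasles (- T) (-1) T), <- (Chasles (-1) 1 T).
  assert (0 <= RInt h (- T) (-1)) by (apply RInt_ge_0; auto; [lra | intros; now left]).
  assert (0 <= RInt h 1 T) by (apply RInt_ge_0; auto; intros; now left).
  lra.
Qed.

Lemma RInt_sym_pos_multiple (F : R -> R) b :
  (forall v, continuous F v) -> (forall v, pos_multiple b (F v)) ->
  exists Q0, 0 < Q0 /\ forall T, 1 <= T -> exists Q, Q0 <= Q /\ RInt F (- T) T = b * Q.
Proof.
  intros HF Hmul. destruct (Req_dec b 0) as [Hb | Hb].
  - exists 1. split; [lra |]. intros T _. exists 1. split; [lra |].
    rewrite (RInt_ext _ (fun _ => 0)).
    + rewrite RInt_const. unfold scal; simpl; unfold mult; simpl. rewrite Hb. ring.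
    + intros v _. destruct (Hmul v) as [w [_ ->]]. now rewrite Hb, Rmult_0_l.
  - set (g := fun v => F v / b).
    assert (Hgc : forall v, continuous g v).
    { intro v. apply (continuous_mult F (fun _ => / b)); [apply HF | apply continuous_const]. }
    assert (Hgp : forall v, 0 < g v).
    { intro v. destruct (Hmul v) as [w [Hw HFv]]. unfold g. rewrite HFv.
      replace (b * w / b) with w by (field; exact Hb). exact Hw. }
    exists (RInt g (-1) 1). split; [apply (RInt_sym_pos g 1); auto; lra |].
    intros T HT. exists (RInt g (- T) T). split; [apply RInt_sym_pos; auto |].
    rewrite <- (RInt_scal (V := R_CompleteNormedModule)).
    + apply RInt_ext. intros v _. unfold g, scal; simpl; unfold mult; simpl. field. exact Hb.
    + apply (@ex_RInt_continuous R_CompleteNormedModule). auto.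
Qed.

Lemma pos_multiple_of_approx (a b k0 Q0 : R) (K P : R -> R) : 0 < k0 -> 0 < Q0 ->
  (forall T, 1 <= T -> k0 <= K T /\ exists Q, Q0 <= Q /\ P T = b * Q) ->
  (forall eps, 0 < eps -> exists T, 1 <= T /\ Rabs (a * K T - P T) < eps) ->
  pos_multiple b a.
Proof.
  intros Hk0 HQ0 HKP Happrox. destruct (Req_dec b 0) as [Hb | Hb].
  - exists 1. split; [lra |]. rewrite Hb, Rmult_0_l.
    destruct (Req_dec a 0) as [Ha | Ha]; [exact Ha | exfalso].
    assert (Habs : 0 < Rabs a) by (apply Rabs_pos_lt; exact Ha).
    destruct (Happrox (Rabs a * k0) ltac:(nra)) as [T [HT Hsmall]].
    destruct (HKP T HT) as [HK [Q [_ HP]]].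
    rewrite HP, Hb, Rmult_0_l, Rminus_0_r, Rabs_mult, (Rabs_right (K T)) in Hsmall by lra.
    nra.
  - exists (a / b).
    assert (Habs : 0 < Rabs b) by (apply Rabs_pos_lt; exact Hb).
    destruct (Happrox (Rabs b * Q0 / 2) ltac:(nra)) as [T [HT Hsmall]].
    destruct (HKP T HT) as [HK [Q [HQ HP]]].
    replace (a * K T - P T) with (b * (a / b * K T - Q)) in Hsmall by (rewrite HP; field; exact Hb).
    rewrite Rabs_mult in Hsmall.
    assert (Hclose : Rabs (a / b * K T - Q) < Q0 / 2).
    { apply (Rmult_lt_reg_l (Rabs b)); [exact Habs | lra]. }
    pose proof (Rle_abs (- (a / b * K T - Q))). rewrite Rabs_Ropp in *.
    split; [| field; exact Hb].
    destruct (Rle_lt_dec (a / b) 0) as [Hw | Hw]; [| exact Hw].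
    assert (a / b * K T <= 0) by nra. lra.
Qed.

Lemma continuous_sum_shifted_kernel (a D : nat -> R) d m n v :
  (forall j, (m <= j <= n)%nat -> 0 < D j) ->
  continuous (fun v => sum_n_m (fun j => a j * (exp (d * v) / (exp v + D j) ^ 2)) m n) v.
Proof.
  intros HD.
  apply (ex_derive_continuous (fun v => sum_n_m (fun j => a j * (exp (d * v) / (exp v + D j) ^ 2)) m n)).
  eexists. apply is_derive_sum_n_m. intros j Hj. apply Derive_correct.
  specialize (HD j Hj). pose proof (exp_pos v). auto_derive. apply Rgt_not_eq. nra.
Qed.

Lemma RInt_sum_shifted_kernel (a D : nat -> R) d m n T :
  (forall j, (m <= j <= n)%nat -> 0 < D j) ->
  RInt (fun v => sum_n_m (fun j => a j * (exp (d * v) / (exp v + D j) ^ 2)) m n) (- T) T =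
  sum_n_m (fun j => a j * Rpower (D j) (d - 2) *
                    RInt (beta_kernel d) (- T - ln (D j)) (T - ln (D j))) m n.
Proof.
  intros HD.
  assert (E : forall j, a j * Rpower (D j) (d - 2) * RInt (beta_kernel d) (- T - ln (D j)) (T - ln (D j))
    = a j * (Rpower (D j) (d - 2) * RInt (beta_kernel d) (- T - ln (D j)) (T - ln (D j))))
    by (intro j; ring).
  rewrite (sum_n_m_ext _ _ _ _ E). apply is_RInt_unique, is_RInt_sum_n_m.
  intros j Hj. apply (is_RInt_scal (fun v => exp (d * v) / (exp v + D j) ^ 2)).
  apply is_RInt_rescaled_beta_kernel, HD, Hj.
Qed.

Lemma sum_sin_pow_dist_ring2 n r d phi : (0 < n)%nat -> 0 < r -> 0 < d < 1 ->
  (forall j, (1 <= j <= n)%nat -> 0 < dist_ring2 r (ring_angle n phi j)) ->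
  pos_multiple (- sin (INR n * phi))
    (sum_n_m (fun j => sin (ring_angle n phi j) * Rpower (dist_ring2 r (ring_angle n phi j)) (d - 2)) 1 n).
Proof.
  intros Hn Hr Hd HD.
  set (theta := ring_angle n phi) in *.
  set (D := fun j => dist_ring2 r (theta j)) in *.
  set (F := fun v => sum_n_m (fun j => sin (theta j) * (exp (d * v) / (exp v + D j) ^ 2)) 1 n).
  assert (HFsign : forall v, pos_multiple (- sin (INR n * phi)) (F v)).
  { intro v.
    assert (E : forall j, sin (theta j) * (exp (d * v) / (exp v + D j) ^ 2)
                          = exp (d * v) * (sin (theta j) / (exp v + D j) ^ 2))
      by (intro j; unfold Rdiv; ring).
    unfold F. rewrite (sum_n_m_ext _ _ _ _ E), (@sum_n_m_mult_l R_Ring).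
    apply pos_multiple_scale; [apply exp_pos |].
    apply sum_sin_div_shifted_dist_sqr; [exact Hn | exact Hr | apply exp_pos]. }
  destruct (RInt_sym_pos_multiple F _ (fun v => continuous_sum_shifted_kernel _ _ d 1 n v HD) HFsign)
    as [Q0 [HQ0 HQ]].
  assert (HK : forall T, 1 <= T -> 0 < RInt (beta_kernel d) (-1) 1 <= RInt (beta_kernel d) (- T) T)
    by (intros; apply RInt_sym_pos; auto using beta_kernel_continuous, beta_kernel_pos).
  apply (pos_multiple_of_approx _ _ (RInt (beta_kernel d) (-1) 1) Q0
           (fun T => RInt (beta_kernel d) (- T) T) (fun T => RInt F (- T) T)).
  - apply (HK 1). lra.
  - exact HQ0.
  - intros T HT. split; [apply HK, HT | apply HQ, HT].
  - intros eps Heps.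
    destruct (sum_shifted_beta_kernel_approx (fun j => sin (theta j) * Rpower (D j) (d - 2))
                (fun j => ln (D j)) d 1 n eps) as [T [HT Happ]]; [lra | exact Heps |].
    exists T. split; [exact HT |]. unfold F. rewrite RInt_sum_shifted_kernel by exact HD. exact Happ.
Qed.

Lemma Rpower_sqrt_nonneg y p : 0 <= y -> Rpower (sqrt y) p = Rpower y (p / 2).
Proof.
  intros [Hy | <-].
  - rewrite <- Rpower_sqrt, Rpower_mult by exact Hy. f_equal. field.
  - (* both sides are [exp 0], since [ln 0 = 0] *)
    assert (Hln0 : ln 0 = 0)
      by (unfold ln; destruct (Rlt_dec 0 0) as [H0 | _]; [destruct (Rlt_irrefl 0 H0) | reflexivity]).
    rewrite sqrt_0. unfold Rpower. now rewrite Hln0, !Rmult_0_r.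
Qed.

Lemma is_derive_phi_alpha_dist_ring alpha r c t : alpha <> 1 -> 0 < dist_ring2 r (c - t) ->
  is_derive (fun u => phi_alpha alpha (dist_ring r (c - u))) t
    (r * sin (c - t) * Rpower (dist_ring2 r (c - t)) (- (alpha + 1) / 2)).
Proof.
  intros Ha HD.
  apply (is_derive_ext (fun u => exp ((1 - alpha) / 2 * ln (dist_ring2 r (c - u))) / (alpha - 1))).
  { intro u. unfold phi_alpha, dist_ring. rewrite Rpower_sqrt_nonneg, dist_ring_sqr.
    - unfold Rpower. do 3 f_equal.
    - pose proof (pow2_ge_0 (r - cos (c - u))). pose proof (pow2_ge_0 (sin (c - u))). lra. }
  assert (Hpow : Rpower (dist_ring2 r (c - t)) (- (alpha + 1) / 2)
                 = exp ((1 - alpha) / 2 * ln (dist_ring2 r (c - t))) / dist_ring2 r (c - t)).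
  { unfold Rpower.
    replace (- (alpha + 1) / 2 * ln _) with ((1 - alpha) / 2 * ln (dist_ring2 r (c - t))
                                            + - ln (dist_ring2 r (c - t))) by field.
    rewrite exp_plus, exp_Ropp, exp_ln by exact HD. reflexivity. }
  rewrite Hpow. unfold dist_ring2 in *. auto_derive; [exact HD |].
  replace (c + - t) with (c - t) by ring.
  replace (1 + r * (r * 1) + - (2 * r * cos (c - t))) with (1 + r ^ 2 - 2 * r * cos (c - t)) by ring.
  field. split; lra.
Qed.

Lemma is_derive_V alpha mu n r phi : alpha <> 1 ->
  (forall j, (1 <= j <= n)%nat -> 0 < dist_ring2 r (ring_angle n phi j)) ->
  is_derive (fun t => V alpha mu n r t) phi
    (r / (s_const alpha n + mu) *
     sum_n_m (fun j => sin (ring_angle n phi j) *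
                       Rpower (dist_ring2 r (ring_angle n phi j)) (- (alpha + 1) / 2)) 1 n).
Proof.
  intros Ha HD. unfold V.
  eapply is_derive_value.
  - apply (is_derive_plus (fun _ => r ^ 2 / 2 + mu / (s_const alpha n + mu) * phi_alpha alpha r));
      [apply is_derive_const |].
    apply is_derive_sum_n_m. intros j Hj.
    apply (is_derive_scal (fun t => phi_alpha alpha (dist_ring r (INR j * zeta n - t)))).
    apply is_derive_phi_alpha_dist_ring; [exact Ha | apply HD, Hj].
  - rewrite <- (@sum_n_m_mult_l R_Ring). unfold zero, plus, mult; simpl.
    rewrite Rplus_0_l. apply sum_n_m_ext. intro j. cbn. unfold ring_angle, Rdiv. ring.
Qed.

Lemma in_domain_dist_ring2_pos n r phi j : in_domain n r phi -> 0 < dist_ring2 r (ring_angle n phi j).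
Proof.
  intros [_ Hvertex]. set (theta := ring_angle n phi j).
  rewrite <- dist_ring_sqr.
  pose proof (pow2_ge_0 (r - cos theta)) as Hsq1. pose proof (pow2_ge_0 (sin theta)) as Hsq2.
  destruct (Rle_lt_or_eq_dec 0 _ (Rplus_le_le_0_compat _ _ Hsq1 Hsq2)) as [Hlt | Heq]; [exact Hlt |].
  exfalso. apply (Hvertex j).
  assert (Hcos : cos theta = r) by nra. assert (Hsin : sin theta = 0) by nra.
  replace (INR j * zeta n) with (theta + phi) by (unfold theta, ring_angle; ring).
  rewrite cos_plus, sin_plus, Hcos, Hsin. split; ring.
Qed.

Lemma s_const_pos alpha n : (2 <= n)%nat -> 0 < s_const alpha n.
Proof.
  intros Hn. unfold s_const. apply Rmult_lt_0_compat; [apply exp_pos |].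
  apply sum_n_m_pos; [lia |]. intros. apply exp_pos.
Qed.

Theorem mainTheorem9 (alpha mu : R) (n : nat) :
  1 < alpha < 3 -> (2 <= n)%nat -> 0 <= mu ->
  exists omega : R -> R -> R,
    forall r varphi : R, in_domain n r varphi ->
      0 < omega r varphi /\
      is_derive (fun t => V alpha mu n r t) varphi
                (- sin (INR n * varphi) * omega r varphi).
Proof.
  intros Ha Hn Hmu.
  set (dV := fun r phi => r / (s_const alpha n + mu) *
     sum_n_m (fun j => sin (ring_angle n phi j) *
                       Rpower (dist_ring2 r (ring_angle n phi j)) (- (alpha + 1) / 2)) 1 n).
  exists (fun r phi => pos_multiple_ratio (- sin (INR n * phi)) (dV r phi)).
  intros r phi Hdom.
  assert (HD : forall j, (1 <= j <= n)%nat -> 0 < dist_ring2 r (ring_angle n phi j))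
    by (intros; apply in_domain_dist_ring2_pos, Hdom).
  assert (Hmul : pos_multiple (- sin (INR n * phi)) (dV r phi)).
  { pose proof (s_const_pos alpha n Hn). destruct Hdom as [Hr _].
    apply pos_multiple_scale; [apply Rdiv_lt_0_compat; lra |].
    replace (- (alpha + 1) / 2) with ((3 - alpha) / 2 - 2) by field.
    apply sum_sin_pow_dist_ring2; auto; [lia | lra]. }
  destruct (pos_multiple_ratio_spec _ _ Hmul) as [Hpos Heq].
  split; [exact Hpos |].
  eapply is_derive_value; [apply is_derive_V; [lra | exact HD] | exact Heq].
Qed.
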